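(* Let $U$ be an open subset of $\mathbb{H}\cong\mathbb{C}^2$. The set $\mathcal{H}_{\mathbb{R}}$ of almost everywhere defined hyperholomorphic functions $f=f_1+f_2\mathbf{j}$ on $U$ whose components $f_1,f_2$ are real valued is a right algebra over $\mathbb{R}$ (with respect to pointwise addition and pointwise quaternionic multiplication).
   Context: Quaternions are written $q=z_1+z_2\mathbf{j}$ with $z_1,z_2\in\mathbb{C}$, where $\mathbf{j}^2=-1$ and $z\mathbf{j}=\mathbf{j}\overline z$ for $z\in\mathbb{C}$. A smooth function $f:U\to\mathbb{H}$ is written $f=f_1+f_2\mathbf{j}$ with $f_1,f_2$ complex valued (its components). The product of $f=f_1+f_2\mathbf{j}$ and $g=g_1+g_2\mathbf{j}$ is $f*g=f_1g_1-f_2\overline g_2+(f_1g_2+f_2\overline g_1)\mathbf{j}$. The modified Cauchy–Fueter operator is $\mathcal{D}f=\frac12\big(\frac{\partial f_1}{\partial\overline z_1}-\frac{\partial\overline f_2}{\partial z_2}\big)+\mathbf{j}\,\frac12\big(\frac{\partial f_1}{\partial\overline z_2}+\frac{\partial\overline f_2}{\partial z_1}\big)$, and $f$ is hyperholomorphic if $\mathcal{D}f=0$ where defined. An almost everywhere defined hyperholomorphic function is one defined and smooth on an open subset of $U$ of full measure, where it satisfies $\mathcal{D}f=0$. *)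

From Stdlib Require Import Reals List.
From Coquelicot Require Import Coquelicot.
Open Scope R_scope.

(* A point q = z1 + z2 j of H = C^2 is represented by the pair (z1, z2). *)
Definition pt : Type := (C * C)%type.

(* real coordinates of a point: 0 -> x1, 1 -> y1, 2 -> x2, 3 -> y2,
   where z1 = x1 + i y1 and z2 = x2 + i y2 *)
Definition coord (p : pt) (k : nat) : R :=
  match k with
  | 0%nat => Re (fst p)
  | 1%nat => Im (fst p)
  | 2%nat => Re (snd p)
  | _ => Im (snd p)
  end.

Definition shift (p : pt) (k : nat) (t : R) : pt :=
  match k with
  | 0%nat => ((Re (fst p) + t, Im (fst p)), snd p)
  | 1%nat => ((Re (fst p), Im (fst p) + t), snd p)
  | 2%nat => (fst p, (Re (snd p) + t, Im (snd p)))
  | _ => (fst p, (Re (snd p), Im (snd p) + t))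
  end.

Definition dpart (k : nat) (g : pt -> C) (p : pt) : C :=
  (Derive (fun t => Re (g (shift p k t))) 0,
   Derive (fun t => Im (g (shift p k t))) 0).

Definition ex_dpart (k : nat) (g : pt -> C) (p : pt) : Prop :=
  ex_derive (fun t => Re (g (shift p k t))) 0 /\
  ex_derive (fun t => Im (g (shift p k t))) 0.

Definition iter_dpart (l : list nat) (g : pt -> C) : pt -> C :=
  fold_right (fun k h => dpart k h) g l.

Definition is_dir (k : nat) : Prop := (k < 4)%nat.

Definition smooth_on (V : pt -> Prop) (g : pt -> C) : Prop :=
  forall (l : list nat), List.Forall is_dir l ->
    forall p, V p ->
      continuous (iter_dpart l g) p /\
      (forall k, is_dir k -> ex_dpart k (iter_dpart l g) p).

Definition dzbar1 (g : pt -> C) (p : pt) : C :=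
  Cmult (RtoC (1/2)) (Cplus (dpart 0 g p) (Cmult Ci (dpart 1 g p))).
Definition dz1 (g : pt -> C) (p : pt) : C :=
  Cmult (RtoC (1/2)) (Cminus (dpart 0 g p) (Cmult Ci (dpart 1 g p))).
Definition dzbar2 (g : pt -> C) (p : pt) : C :=
  Cmult (RtoC (1/2)) (Cplus (dpart 2 g p) (Cmult Ci (dpart 3 g p))).
Definition dz2 (g : pt -> C) (p : pt) : C :=
  Cmult (RtoC (1/2)) (Cminus (dpart 2 g p) (Cmult Ci (dpart 3 g p))).

(* The modified Cauchy-Fueter operator applied to f = f1 + f2 j,
   returned as the pair of its components (D f = a + b j  <->  (a, b)). *)
Definition CF_op (f1 f2 : pt -> C) (p : pt) : C * C :=
  (Cmult (RtoC (1/2)) (Cminus (dzbar1 f1 p) (dz2 (fun q => Cconj (f2 q)) p)),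
   Cmult (RtoC (1/2)) (Cplus (dzbar2 f1 p) (dz1 (fun q => Cconj (f2 q)) p))).

(* Lebesgue null subsets of H = R^4: coverable by countably many closed boxes
   of arbitrarily small total volume. *)
Definition box_vol (a b : nat -> R) : R :=
  (b 0%nat - a 0%nat) * (b 1%nat - a 1%nat) * (b 2%nat - a 2%nat) * (b 3%nat - a 3%nat).

Definition null_set (S : pt -> Prop) : Prop :=
  forall eps : R, 0 < eps ->
    exists a b : nat -> nat -> R,
      (forall n k, a n k <= b n k) /\
      (forall p, S p -> exists n, forall k, (k < 4)%nat ->
                   a n k <= coord p k <= b n k) /\
      (forall N, sum_f_R0 (fun n => box_vol (a n) (b n)) N <= eps).

(* f = f1 + f2 j, defined (at least) on V, is an almost everywhere defined
   hyperholomorphic function on U: V is an open subset of U of full measure,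
   f is smooth on V and D f = 0 on V. *)
Definition ae_hyperholo (U V : pt -> Prop) (f1 f2 : pt -> C) : Prop :=
  open V /\ (forall p, V p -> U p) /\
  null_set (fun p => U p /\ ~ V p) /\
  smooth_on V f1 /\ smooth_on V f2 /\
  (forall p, V p -> CF_op f1 f2 p = (RtoC 0, RtoC 0)).

Definition in_HR (U V : pt -> Prop) (f1 f2 : pt -> C) : Prop :=
  ae_hyperholo U V f1 f2 /\
  (forall p, V p -> Im (f1 p) = 0 /\ Im (f2 p) = 0).

Definition qadd1 (f1 f2 g1 g2 : pt -> C) : pt -> C := fun p => Cplus (f1 p) (g1 p).
Definition qadd2 (f1 f2 g1 g2 : pt -> C) : pt -> C := fun p => Cplus (f2 p) (g2 p).
(* f * g = f1 g1 - f2 conj(g2) + (f1 g2 + f2 conj(g1)) j *)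
Definition qmul1 (f1 f2 g1 g2 : pt -> C) : pt -> C :=
  fun p => Cminus (Cmult (f1 p) (g1 p)) (Cmult (f2 p) (Cconj (g2 p))).
Definition qmul2 (f1 f2 g1 g2 : pt -> C) : pt -> C :=
  fun p => Cplus (Cmult (f1 p) (g2 p)) (Cmult (f2 p) (Cconj (g1 p))).

(* For real-valued components f1 = u and f2 = v, the equation D f = 0 becomes the
   linear first-order system u_x1 = v_x2, u_y1 = - v_y2, u_x2 = - v_x1, u_y2 = v_y1,
   and the quaternionic product becomes (u u' - v v') + (u v' + v u') j.  Sums and
   constants solve the system by linearity; for the product, the Leibniz rule and the
   equations for (u, v) and (u', v') turn each equation for (u u' - v v', u v' + v u')
   into an identity.  Smoothness survives sums and products, and the common domain of
   two almost everywhere defined functions is again open of full measure, since the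
   union of two null sets is null. *)

From Stdlib Require Import Reals List Lra Lia FunctionalExtensionality Classical.
From Coquelicot Require Import Coquelicot.
Open Scope R_scope.

Definition dpartR (k : nat) (u : pt -> R) (p : pt) : R :=
  Derive (fun t => u (shift p k t)) 0.
Definition ex_dpartR (k : nat) (u : pt -> R) (p : pt) : Prop :=
  ex_derive (fun t => u (shift p k t)) 0.
Definition iter_dpartR (l : list nat) (u : pt -> R) : pt -> R :=
  fold_right dpartR u l.

Lemma shift_0 p k : shift p k 0 = p.
Proof.
destruct p as [[a b] [c d]]; destruct k as [|[|[|k]]]; simpl; now rewrite Rplus_0_r.
Qed.

Lemma ball_shift (p : pt) k (e : posreal) t : Rabs t < e -> ball p e (shift p k t).
Proof.
intros Ht. destruct p as [[a b] [c d]].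
destruct k as [|[|[|k]]]; simpl; split; simpl; split; simpl; try apply ball_center;
  unfold ball; simpl; unfold AbsRing_ball, abs, minus, plus, opp; simpl;
  match goal with |- Rabs (?x + t + - ?x) < _ => replace (x + t + - x) with t by ring end;
  exact Ht.
Qed.

Lemma locally_shift (V : pt -> Prop) p k :
  open V -> V p -> locally 0 (fun t => V (shift p k t)).
Proof.
intros HV Hp. destruct (HV p Hp) as [e He]. exists e. intros t Ht.
apply He, ball_shift.
unfold ball in Ht; simpl in Ht; unfold AbsRing_ball, abs, minus, plus, opp in Ht; simpl in Ht.
now rewrite Ropp_0, Rplus_0_r in Ht.
Qed.

Lemma locally_shift_ext (V : pt -> Prop) (u v : pt -> R) p k :
  open V -> (forall q, V q -> u q = v q) -> V p ->
  locally 0 (fun t => u (shift p k t) = v (shift p k t)).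
Proof.
intros HV Huv Hp. apply filter_imp with (fun t => V (shift p k t)).
- intros t; apply Huv.
- now apply locally_shift.
Qed.

Lemma dpartR_ext_on V u v k p :
  open V -> (forall q, V q -> u q = v q) -> V p -> dpartR k u p = dpartR k v p.
Proof. intros HV Huv Hp. apply Derive_ext_loc. now apply locally_shift_ext with V. Qed.

Lemma ex_dpartR_ext_on V u v k p :
  open V -> (forall q, V q -> u q = v q) -> V p -> ex_dpartR k u p -> ex_dpartR k v p.
Proof. intros HV Huv Hp. apply ex_derive_ext_loc. now apply locally_shift_ext with V. Qed.

Lemma dpartR_const c k p : dpartR k (fun _ => c) p = 0.
Proof. apply (Derive_const c). Qed.

Lemma ex_dpartR_const c k p : ex_dpartR k (fun _ => c) p.
Proof. apply (ex_derive_const c). Qed.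

Lemma dpartR_plus u v k p : ex_dpartR k u p -> ex_dpartR k v p ->
  dpartR k (fun q => u q + v q) p = dpartR k u p + dpartR k v p.
Proof. apply (Derive_plus (fun t => u (shift p k t)) (fun t => v (shift p k t))). Qed.

Lemma ex_dpartR_plus u v k p : ex_dpartR k u p -> ex_dpartR k v p ->
  ex_dpartR k (fun q => u q + v q) p.
Proof. apply (ex_derive_plus (fun t => u (shift p k t)) (fun t => v (shift p k t))). Qed.

Lemma dpartR_minus u v k p : ex_dpartR k u p -> ex_dpartR k v p ->
  dpartR k (fun q => u q - v q) p = dpartR k u p - dpartR k v p.
Proof. apply (Derive_minus (fun t => u (shift p k t)) (fun t => v (shift p k t))). Qed.

Lemma dpartR_mult u v k p : ex_dpartR k u p -> ex_dpartR k v p ->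
  dpartR k (fun q => u q * v q) p = dpartR k u p * v p + u p * dpartR k v p.
Proof.
intros Hu Hv. unfold dpartR.
rewrite (Derive_mult (fun t => u (shift p k t)) (fun t => v (shift p k t))) by assumption.
now rewrite shift_0.
Qed.

Lemma ex_dpartR_mult u v k p : ex_dpartR k u p -> ex_dpartR k v p ->
  ex_dpartR k (fun q => u q * v q) p.
Proof. apply (ex_derive_mult (fun t => u (shift p k t)) (fun t => v (shift p k t))). Qed.

Definition regular_at (u : pt -> R) (p : pt) : Prop :=
  continuous u p /\ forall k, is_dir k -> ex_dpartR k u p.

Lemma regular_at_const c p : regular_at (fun _ => c) p.
Proof. split; [apply continuous_const | intros; apply ex_dpartR_const]. Qed.

Lemma regular_at_plus u v p : regular_at u p -> regular_at v p ->
  regular_at (fun q => u q + v q) p.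
Proof.
intros [Cu Du] [Cv Dv]. split.
- apply (continuous_plus u v); assumption.
- intros k Hk. apply ex_dpartR_plus; auto.
Qed.

Lemma regular_at_mult u v p : regular_at u p -> regular_at v p ->
  regular_at (fun q => u q * v q) p.
Proof.
intros [Cu Du] [Cv Dv]. split.
- apply (continuous_mult u v); assumption.
- intros k Hk. apply ex_dpartR_mult; auto.
Qed.

Lemma regular_at_ext_on V u v p : open V -> (forall q, V q -> u q = v q) -> V p ->
  regular_at u p -> regular_at v p.
Proof.
intros HV Huv Hp [Cu Du]. split.
- apply continuous_ext_loc with u; [apply filter_imp with V; auto | assumption].
- intros k Hk. apply ex_dpartR_ext_on with V u; auto.
Qed.

Definition smooth_upto (V : pt -> Prop) (n : nat) (u : pt -> R) : Prop :=
  forall l, (length l <= n)%nat -> List.Forall is_dir l ->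
    forall p, V p -> regular_at (iter_dpartR l u) p.

Definition smoothR_on (V : pt -> Prop) (u : pt -> R) : Prop :=
  forall n, smooth_upto V n u.

Lemma smooth_upto_0 V u : smooth_upto V 0 u <-> forall p, V p -> regular_at u p.
Proof.
split.
- intros H p Hp. apply (H nil); simpl; auto.
- intros H [|k l] Hl Hd p Hp; [now apply H | simpl in Hl; lia].
Qed.

Lemma smooth_upto_S V n u : smooth_upto V (S n) u <->
  smooth_upto V 0 u /\ forall k, is_dir k -> smooth_upto V n (dpartR k u).
Proof.
unfold smooth_upto, iter_dpartR. split.
- intros H. split.
  + intros l Hl. apply H. lia.
  + intros k Hk l Hl Hd p Hp.
    change (regular_at (fold_right dpartR (fold_right dpartR u (k :: nil)) l) p).
    rewrite <- fold_right_app. apply H; auto.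
    * rewrite length_app; simpl; lia.
    * apply List.Forall_app; auto.
- intros [H0 HS] l Hl Hd p Hp. destruct l as [|k l _] using rev_ind; [now apply H0|].
  rewrite fold_right_app. apply List.Forall_app in Hd as [Hd Hk]. inversion Hk; subst.
  apply HS; auto. rewrite length_app in Hl; simpl in Hl; lia.
Qed.

Lemma smooth_upto_pred V n u : smooth_upto V (S n) u -> smooth_upto V n u.
Proof. intros H l Hl. apply H. lia. Qed.

Lemma smooth_upto_regular V n u : smooth_upto V n u -> forall p, V p -> regular_at u p.
Proof. intros H. apply smooth_upto_0. intros l Hl. apply H. lia. Qed.

Lemma smooth_upto_subset V W n u :
  (forall p, W p -> V p) -> smooth_upto V n u -> smooth_upto W n u.
Proof. intros HWV H l Hl Hd p Hp. apply H; auto. Qed.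

Section SmoothAlgebra.
Variable V : pt -> Prop.
Hypothesis HV : open V.

Lemma smooth_upto_ext_on n u v :
  (forall q, V q -> u q = v q) -> smooth_upto V n u -> smooth_upto V n v.
Proof.
revert u v. induction n as [|n IH]; intros u v Huv Hu.
- rewrite smooth_upto_0 in *. intros p Hp. apply regular_at_ext_on with V u; auto.
- rewrite smooth_upto_S in *. destruct Hu as [H0 HS]. split.
  + rewrite smooth_upto_0 in *. intros p Hp. apply regular_at_ext_on with V u; auto.
  + intros k Hk. apply IH with (dpartR k u); auto.
    intros q Hq. now apply dpartR_ext_on with V.
Qed.

Lemma smooth_upto_const n c : smooth_upto V n (fun _ => c).
Proof.
revert c. induction n as [|n IH]; intros c.
- apply smooth_upto_0. intros; apply regular_at_const.
- apply smooth_upto_S. split.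
  + apply smooth_upto_0. intros; apply regular_at_const.
  + intros k Hk. apply smooth_upto_ext_on with (fun _ => 0); auto.
    intros; symmetry; apply dpartR_const.
Qed.

Lemma smooth_upto_plus n u v :
  smooth_upto V n u -> smooth_upto V n v -> smooth_upto V n (fun q => u q + v q).
Proof.
revert u v. induction n as [|n IH]; intros u v Hu Hv.
- rewrite smooth_upto_0 in *. intros p Hp. apply regular_at_plus; auto.
- pose proof (smooth_upto_regular _ _ _ Hu) as Ru.
  pose proof (smooth_upto_regular _ _ _ Hv) as Rv.
  rewrite smooth_upto_S in *. destruct Hu as [_ Hu], Hv as [_ Hv]. split.
  + apply smooth_upto_0. intros p Hp. apply regular_at_plus; auto.
  + intros k Hk. apply smooth_upto_ext_on with (fun q => dpartR k u q + dpartR k v q); auto.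
    intros q Hq. symmetry. apply dpartR_plus; [apply Ru | apply Rv]; auto.
Qed.

Lemma smooth_upto_mult n u v :
  smooth_upto V n u -> smooth_upto V n v -> smooth_upto V n (fun q => u q * v q).
Proof.
revert u v. induction n as [|n IH]; intros u v Hu Hv.
- rewrite smooth_upto_0 in *. intros p Hp. apply regular_at_mult; auto.
- pose proof (smooth_upto_regular _ _ _ Hu) as Ru.
  pose proof (smooth_upto_regular _ _ _ Hv) as Rv.
  pose proof (smooth_upto_pred _ _ _ Hu) as Hu'.
  pose proof (smooth_upto_pred _ _ _ Hv) as Hv'.
  rewrite smooth_upto_S in *. destruct Hu as [_ Hu], Hv as [_ Hv]. split.
  + apply smooth_upto_0. intros p Hp. apply regular_at_mult; auto.
  + intros k Hk.
    apply smooth_upto_ext_on with (fun q => dpartR k u q * v q + u q * dpartR k v q).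
    * intros q Hq. symmetry. apply dpartR_mult; [apply Ru | apply Rv]; auto.
    * apply smooth_upto_plus; auto.
Qed.

Lemma smoothR_on_ext_on u v :
  (forall q, V q -> u q = v q) -> smoothR_on V u -> smoothR_on V v.
Proof. intros Huv Hu n. now apply smooth_upto_ext_on with u. Qed.

Lemma smoothR_on_const c : smoothR_on V (fun _ => c).
Proof. intros n. apply smooth_upto_const. Qed.

Lemma smoothR_on_plus u v :
  smoothR_on V u -> smoothR_on V v -> smoothR_on V (fun q => u q + v q).
Proof. intros Hu Hv n. now apply smooth_upto_plus. Qed.

Lemma smoothR_on_mult u v :
  smoothR_on V u -> smoothR_on V v -> smoothR_on V (fun q => u q * v q).
Proof. intros Hu Hv n. now apply smooth_upto_mult. Qed.

Lemma smoothR_on_minus u v :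
  smoothR_on V u -> smoothR_on V v -> smoothR_on V (fun q => u q - v q).
Proof.
intros Hu Hv. apply smoothR_on_ext_on with (fun q => u q + (-1) * v q).
- intros q _. ring.
- apply smoothR_on_plus, smoothR_on_mult; auto using smoothR_on_const.
Qed.

End SmoothAlgebra.

Lemma smoothR_on_regular V u : smoothR_on V u -> forall p, V p -> regular_at u p.
Proof. intros H. apply (smooth_upto_regular V 0), H. Qed.

Lemma smoothR_on_subset V W u :
  (forall p, W p -> V p) -> smoothR_on V u -> smoothR_on W u.
Proof. intros HWV H n. now apply smooth_upto_subset with V. Qed.

Lemma iter_dpart_parts l g :
  iter_dpart l g =
  fun p => (iter_dpartR l (fun q => Re (g q)) p, iter_dpartR l (fun q => Im (g q)) p).
Proof.
induction l as [|k l IH]; simpl.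
- extensionality p. now destruct (g p).
- now rewrite IH.
Qed.

Lemma smooth_on_parts V g :
  smooth_on V g <-> smoothR_on V (fun q => Re (g q)) /\ smoothR_on V (fun q => Im (g q)).
Proof.
split.
- intros H. split; intros n l _ Hd p Hp; destruct (H l Hd p Hp) as [Hc He];
    rewrite iter_dpart_parts in Hc, He; split; try (intros k Hk; apply (He k Hk)).
  + apply (continuous_comp _ fst p Hc (continuous_fst _ _)).
  + apply (continuous_comp _ snd p Hc (continuous_snd _ _)).
- intros [HRe HIm] l Hd p Hp. rewrite iter_dpart_parts.
  destruct (HRe (length l) l (le_n _) Hd p Hp) as [Hc1 He1].
  destruct (HIm (length l) l (le_n _) Hd p Hp) as [Hc2 He2]. split.
  + apply (continuous_comp_2 (U := prod_UniformSpace C_UniformSpace C_UniformSpace)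
      (X := C_UniformSpace) _ _ pair p Hc1 Hc2).
    apply continuous_ext with (fun x => x); [now intros [x y] | apply continuous_id].
  + intros k Hk. split; [apply He1 | apply He2]; exact Hk.
Qed.

Lemma CF_op_coords f1 f2 p : CF_op f1 f2 p =
  (((dpartR 0 (fun q => Re (f1 q)) p - dpartR 1 (fun q => Im (f1 q)) p
     - dpartR 2 (fun q => Re (f2 q)) p + dpartR 3 (fun q => Im (f2 q)) p) / 4,
    (dpartR 0 (fun q => Im (f1 q)) p + dpartR 1 (fun q => Re (f1 q)) p
     + dpartR 2 (fun q => Im (f2 q)) p + dpartR 3 (fun q => Re (f2 q)) p) / 4),
   ((dpartR 2 (fun q => Re (f1 q)) p - dpartR 3 (fun q => Im (f1 q)) p
     + dpartR 0 (fun q => Re (f2 q)) p - dpartR 1 (fun q => Im (f2 q)) p) / 4,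
    (dpartR 2 (fun q => Im (f1 q)) p + dpartR 3 (fun q => Re (f1 q)) p
     - dpartR 0 (fun q => Im (f2 q)) p - dpartR 1 (fun q => Re (f2 q)) p) / 4)).
Proof.
assert (Hconj : forall k, dpart k (fun q => Cconj (f2 q)) p =
  (dpartR k (fun q => Re (f2 q)) p, - dpartR k (fun q => Im (f2 q)) p)).
{ intros k. unfold dpart. f_equal. apply (Derive_opp (fun t => Im (f2 (shift p k t)))). }
assert (Hf1 : forall k, dpart k f1 p =
  (dpartR k (fun q => Re (f1 q)) p, dpartR k (fun q => Im (f1 q)) p)) by reflexivity.
unfold CF_op, dzbar1, dz2, dzbar2, dz1. rewrite !Hconj, !Hf1.
unfold Cminus, Cplus, Copp, Cmult, RtoC, Ci; simpl. f_equal; f_equal; field.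
Qed.

Definition fueter_system (u v : pt -> R) (p : pt) : Prop :=
  dpartR 0 u p = dpartR 2 v p /\ dpartR 1 u p = - dpartR 3 v p /\
  dpartR 2 u p = - dpartR 0 v p /\ dpartR 3 u p = dpartR 1 v p.

Lemma CF_op_real V f1 f2 p : open V -> V p ->
  (forall q, V q -> Im (f1 q) = 0 /\ Im (f2 q) = 0) ->
  CF_op f1 f2 p = (RtoC 0, RtoC 0) <->
  fueter_system (fun q => Re (f1 q)) (fun q => Re (f2 q)) p.
Proof.
intros HV Hp Hreal.
assert (Z : forall g, (forall q, V q -> Im (g q) = 0) ->
          forall k, dpartR k (fun q => Im (g q)) p = 0).
{ intros g Hg k. rewrite (dpartR_ext_on V _ (fun _ => 0)); auto using dpartR_const. }
rewrite CF_op_coords, !(Z f1), !(Z f2) by (intros q Hq; apply Hreal, Hq).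
unfold fueter_system, RtoC. split.
- intros H. injection H. intros. lra.
- intros (E0 & E1 & E2 & E3). rewrite E0, E1, E2, E3. f_equal; f_equal; field.
Qed.

Lemma fueter_system_ext_on V u v u' v' p : open V ->
  (forall q, V q -> u q = u' q) -> (forall q, V q -> v q = v' q) -> V p ->
  fueter_system u v p -> fueter_system u' v' p.
Proof.
intros HV Hu Hv Hp. unfold fueter_system.
rewrite !(dpartR_ext_on V u u'), !(dpartR_ext_on V v v'); auto.
Qed.

Lemma fueter_system_const a b p : fueter_system (fun _ => a) (fun _ => b) p.
Proof. unfold fueter_system. rewrite !dpartR_const. lra. Qed.

Lemma is_dir_0123 : is_dir 0 /\ is_dir 1 /\ is_dir 2 /\ is_dir 3.
Proof. unfold is_dir; repeat split; lia. Qed.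

Lemma fueter_system_plus u v u' v' p :
  regular_at u p -> regular_at v p -> regular_at u' p -> regular_at v' p ->
  fueter_system u v p -> fueter_system u' v' p ->
  fueter_system (fun q => u q + u' q) (fun q => v q + v' q) p.
Proof.
intros [_ Du] [_ Dv] [_ Du'] [_ Dv'] (E0 & E1 & E2 & E3) (E0' & E1' & E2' & E3').
destruct is_dir_0123 as (I0 & I1 & I2 & I3).
unfold fueter_system. rewrite !dpartR_plus by auto. lra.
Qed.

Lemma fueter_system_qmul u v u' v' p :
  regular_at u p -> regular_at v p -> regular_at u' p -> regular_at v' p ->
  fueter_system u v p -> fueter_system u' v' p ->
  fueter_system (fun q => u q * u' q - v q * v' q) (fun q => u q * v' q + v q * u' q) p.
Proof.
intros [_ Du] [_ Dv] [_ Du'] [_ Dv'] (E0 & E1 & E2 & E3) (E0' & E1' & E2' & E3').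
destruct is_dir_0123 as (I0 & I1 & I2 & I3).
unfold fueter_system.
rewrite !dpartR_minus, !dpartR_plus, !dpartR_mult by auto using ex_dpartR_mult.
rewrite E0, E1, E2, E3, E0', E1', E2', E3'. repeat split; ring.
Qed.

Definition interleave {X : Type} (c1 c2 : nat -> X) (n : nat) : X :=
  if Nat.even n then c1 (Nat.div2 n) else c2 (Nat.div2 n).

Lemma interleave_even {X : Type} (c1 c2 : nat -> X) n : interleave c1 c2 (2 * n) = c1 n.
Proof. unfold interleave. now rewrite Nat.even_even, Nat.div2_double. Qed.

Lemma interleave_odd {X : Type} (c1 c2 : nat -> X) n : interleave c1 c2 (2 * n + 1) = c2 n.
Proof. unfold interleave. now rewrite Nat.even_odd, Nat.div2_odd'. Qed.

Lemma sum_interleave c1 c2 N :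
  sum_f_R0 (interleave c1 c2) (2 * N + 1) = sum_f_R0 c1 N + sum_f_R0 c2 N.
Proof.
induction N as [|N IH].
- simpl. unfold interleave; simpl. ring.
- replace (2 * S N + 1)%nat with (S (S (2 * N + 1))) by lia.
  rewrite !tech5, IH.
  replace (S (2 * N + 1)) with (2 * S N)%nat by lia.
  replace (S (2 * S N)) with (2 * S N + 1)%nat by lia.
  rewrite interleave_even, interleave_odd. ring.
Qed.

Lemma sum_f_R0_le_nonneg c N M :
  (forall n, 0 <= c n) -> (N <= M)%nat -> sum_f_R0 c N <= sum_f_R0 c M.
Proof.
intros Hc HNM. induction HNM as [|M _ IH]; [lra|].
rewrite tech5. specialize (Hc (S M)). lra.
Qed.

Lemma box_vol_nonneg a b : (forall k, a k <= b k) -> 0 <= box_vol a b.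
Proof.
intros H. unfold box_vol.
pose proof (H 0%nat); pose proof (H 1%nat); pose proof (H 2%nat); pose proof (H 3%nat).
repeat apply Rmult_le_pos; lra.
Qed.

Lemma null_set_subset (S T : pt -> Prop) :
  (forall p, T p -> S p) -> null_set S -> null_set T.
Proof.
intros HTS HS eps Heps. destruct (HS eps Heps) as (a & b & Hab & Hcov & Hsum).
exists a, b. split; [|split]; auto.
Qed.

Lemma null_set_empty (S : pt -> Prop) : (forall p, ~ S p) -> null_set S.
Proof.
intros HS eps Heps. exists (fun _ _ => 0), (fun _ _ => 0). split; [|split].
- intros; lra.
- intros p Hp. contradiction (HS p Hp).
- intros N. replace (sum_f_R0 _ N) with 0; [lra|].
  induction N as [|N IH]; simpl; unfold box_vol in *; [ring | rewrite <- IH; ring].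
Qed.

Lemma null_set_union (S1 S2 : pt -> Prop) :
  null_set S1 -> null_set S2 -> null_set (fun p => S1 p \/ S2 p).
Proof.
intros N1 N2 eps Heps.
destruct (N1 (eps / 2)) as (a1 & b1 & Hab1 & Hcov1 & Hsum1); [lra|].
destruct (N2 (eps / 2)) as (a2 & b2 & Hab2 & Hcov2 & Hsum2); [lra|].
exists (interleave a1 a2), (interleave b1 b2). split; [|split].
- intros n k. unfold interleave. destruct (Nat.even n); auto.
- intros p [Hp | Hp].
  + destruct (Hcov1 p Hp) as [n Hn]. exists (2 * n)%nat. now rewrite !interleave_even.
  + destruct (Hcov2 p Hp) as [n Hn]. exists (2 * n + 1)%nat. now rewrite !interleave_odd.
- intros N.
  set (vol1 := fun m => box_vol (a1 m) (b1 m)). set (vol2 := fun m => box_vol (a2 m) (b2 m)).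
  assert (Hvol : forall n,
    box_vol (interleave a1 a2 n) (interleave b1 b2 n) = interleave vol1 vol2 n).
  { intros n. unfold interleave. now destruct (Nat.even n). }
  rewrite (sum_eq _ _ _ (fun n _ => Hvol n)).
  apply Rle_trans with (sum_f_R0 (interleave vol1 vol2) (2 * N + 1)).
  + apply sum_f_R0_le_nonneg; [|lia].
    intros n. unfold interleave. destruct (Nat.even n); apply box_vol_nonneg; auto.
  + rewrite sum_interleave. specialize (Hsum1 N). specialize (Hsum2 N). unfold vol1, vol2. lra.
Qed.

Definition full_open_in (U V : pt -> Prop) : Prop :=
  open V /\ (forall p, V p -> U p) /\ null_set (fun p => U p /\ ~ V p).

Lemma full_open_in_self U : open U -> full_open_in U U.
Proof.
intros HU. split; [|split]; auto. apply null_set_empty. intros p [Hp Hn]. contradiction.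
Qed.

Lemma full_open_in_inter U V W :
  full_open_in U V -> full_open_in U W -> full_open_in U (fun p => V p /\ W p).
Proof.
intros (HV & HVU & NV) (HW & HWU & NW). split; [|split].
- now apply open_and.
- intros p [Hp _]. auto.
- apply null_set_subset with (fun p => (U p /\ ~ V p) \/ (U p /\ ~ W p)).
  + intros p [Hp Hn]. destruct (classic (V p)); [right | left]; split; tauto.
  + now apply null_set_union.
Qed.

Definition real_hyperholo (U V : pt -> Prop) (u v : pt -> R) : Prop :=
  full_open_in U V /\ smoothR_on V u /\ smoothR_on V v /\
  forall p, V p -> fueter_system u v p.

Lemma real_hyperholo_const U V a b :
  full_open_in U V -> real_hyperholo U V (fun _ => a) (fun _ => b).
Proof.
intros HVU. split; [|split; [|split]]; auto using fueter_system_const.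
- apply smoothR_on_const, HVU.
- apply smoothR_on_const, HVU.
Qed.

Lemma real_hyperholo_ext_on U V u v u' v' :
  (forall q, V q -> u q = u' q) -> (forall q, V q -> v q = v' q) ->
  real_hyperholo U V u v -> real_hyperholo U V u' v'.
Proof.
intros Hu Hv (HVU & Su & Sv & Fuv). pose proof (proj1 HVU) as HV.
split; [|split; [|split]]; auto.
- now apply smoothR_on_ext_on with u.
- now apply smoothR_on_ext_on with v.
- intros p Hp. apply fueter_system_ext_on with V u v; auto.
Qed.

Lemma real_hyperholo_restrict U V W u v :
  full_open_in U W -> (forall p, W p -> V p) ->
  real_hyperholo U V u v -> real_hyperholo U W u v.
Proof.
intros HWU HWV (_ & Su & Sv & Fuv). split; [|split; [|split]]; auto.
- now apply smoothR_on_subset with V.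
- now apply smoothR_on_subset with V.
Qed.

Lemma real_hyperholo_inter U V W u v u' v' :
  real_hyperholo U V u v -> real_hyperholo U W u' v' ->
  real_hyperholo U (fun p => V p /\ W p) u v /\ real_hyperholo U (fun p => V p /\ W p) u' v'.
Proof.
intros Huv Hu'v'. pose proof (full_open_in_inter _ _ _ (proj1 Huv) (proj1 Hu'v')) as HX.
split.
- apply real_hyperholo_restrict with V; [exact HX | intros p Hp; apply Hp | exact Huv].
- apply real_hyperholo_restrict with W; [exact HX | intros p Hp; apply Hp | exact Hu'v'].
Qed.

Lemma real_hyperholo_plus U V u v u' v' :
  real_hyperholo U V u v -> real_hyperholo U V u' v' ->
  real_hyperholo U V (fun q => u q + u' q) (fun q => v q + v' q).
Proof.
intros (HVU & Su & Sv & Fuv) (_ & Su' & Sv' & Fu'v'). pose proof (proj1 HVU) as HV.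
split; [|split; [|split]]; auto using smoothR_on_plus.
intros p Hp. apply fueter_system_plus; auto; eapply smoothR_on_regular; eauto.
Qed.

Lemma real_hyperholo_qmul U V u v u' v' :
  real_hyperholo U V u v -> real_hyperholo U V u' v' ->
  real_hyperholo U V (fun q => u q * u' q - v q * v' q) (fun q => u q * v' q + v q * u' q).
Proof.
intros (HVU & Su & Sv & Fuv) (_ & Su' & Sv' & Fu'v'). pose proof (proj1 HVU) as HV.
split; [|split; [|split]]; auto using smoothR_on_minus, smoothR_on_plus, smoothR_on_mult.
intros p Hp. apply fueter_system_qmul; auto; eapply smoothR_on_regular; eauto.
Qed.

Lemma C_of_real z : Im z = 0 -> z = RtoC (Re z).
Proof. destruct z as [a b]. unfold Re, Im, RtoC; simpl. now intros ->. Qed.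

Lemma in_HR_iff U V f1 f2 : in_HR U V f1 f2 <->
  exists u v, real_hyperholo U V u v /\
    forall p, V p -> f1 p = RtoC (u p) /\ f2 p = RtoC (v p).
Proof.
split.
- intros [(HV & HVU & NV & S1 & S2 & Hzero) Hreal].
  exists (fun q => Re (f1 q)), (fun q => Re (f2 q)). split.
  + apply smooth_on_parts in S1 as [S1 _], S2 as [S2 _].
    split; [split; [|split]|split; [|split]]; auto.
    intros p Hp. apply (CF_op_real V); auto.
  + intros p Hp. destruct (Hreal p Hp). split; now apply C_of_real.
- intros (u & v & Huv & Hf).
  assert (Hreal : forall q, V q -> Im (f1 q) = 0 /\ Im (f2 q) = 0).
  { intros q Hq. destruct (Hf q Hq) as [-> ->]. split; reflexivity. }
  assert (Hre : real_hyperholo U V (fun q => Re (f1 q)) (fun q => Re (f2 q))).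
  { apply real_hyperholo_ext_on with u v; auto;
      intros q Hq; destruct (Hf q Hq) as [E1 E2]; rewrite ?E1, ?E2; reflexivity. }
  destruct Hre as ((HV & HVU & NV) & S1 & S2 & Fre).
  assert (Him : forall g, (forall q, V q -> Im (g q) = 0) -> smoothR_on V (fun q => Im (g q))).
  { intros g Hg. apply smoothR_on_ext_on with (fun _ => 0); auto using smoothR_on_const.
    intros q Hq. symmetry. auto. }
  split; [|exact Hreal]. split; [|split; [|split; [|split; [|split]]]]; auto.
  + apply smooth_on_parts. split; auto. apply Him. intros q Hq. apply Hreal, Hq.
  + apply smooth_on_parts. split; auto. apply Him. intros q Hq. apply Hreal, Hq.
  + intros p Hp. apply (CF_op_real V); auto.
Qed.

Theorem corollary2p3 (U : pt -> Prop) (HU : open U) :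
  in_HR U U (fun _ => RtoC 0) (fun _ => RtoC 0) /\
  (forall (V W : pt -> Prop) (f1 f2 g1 g2 : pt -> C),
      in_HR U V f1 f2 -> in_HR U W g1 g2 ->
      in_HR U (fun p => V p /\ W p) (qadd1 f1 f2 g1 g2) (qadd2 f1 f2 g1 g2)) /\
  (forall (V : pt -> Prop) (f1 f2 : pt -> C) (r : R),
      in_HR U V f1 f2 ->
      in_HR U V (fun p => Cmult (f1 p) (RtoC r)) (fun p => Cmult (f2 p) (RtoC r))) /\
  (forall (V W : pt -> Prop) (f1 f2 g1 g2 : pt -> C),
      in_HR U V f1 f2 -> in_HR U W g1 g2 ->
      in_HR U (fun p => V p /\ W p) (qmul1 f1 f2 g1 g2) (qmul2 f1 f2 g1 g2)).
Proof.
split; [|split; [|split]].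
- apply in_HR_iff. exists (fun _ => 0), (fun _ => 0). split; [|auto].
  now apply real_hyperholo_const, full_open_in_self.
- intros V W f1 f2 g1 g2 (u & v & Huv & Ef)%in_HR_iff (u' & v' & Hu'v' & Eg)%in_HR_iff.
  apply in_HR_iff. exists (fun p => u p + u' p), (fun p => v p + v' p). split.
  + apply real_hyperholo_plus; apply (real_hyperholo_inter _ _ _ _ _ _ _ Huv Hu'v').
  + intros p [Vp Wp]. unfold qadd1, qadd2.
    destruct (Ef p Vp) as [-> ->], (Eg p Wp) as [-> ->].
    split; apply injective_projections; simpl; ring.
- (* f r is the product of f with the constant function r + 0 j. *)
  intros V f1 f2 r (u & v & Huv & Ef)%in_HR_iff.
  apply in_HR_iff. exists (fun p => u p * r - v p * 0), (fun p => u p * 0 + v p * r). split.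
  + apply real_hyperholo_qmul; [exact Huv | exact (real_hyperholo_const _ _ r 0 (proj1 Huv))].
  + intros p Vp. destruct (Ef p Vp) as [-> ->].
    split; apply injective_projections; simpl; ring.
- intros V W f1 f2 g1 g2 (u & v & Huv & Ef)%in_HR_iff (u' & v' & Hu'v' & Eg)%in_HR_iff.
  apply in_HR_iff.
  exists (fun p => u p * u' p - v p * v' p), (fun p => u p * v' p + v p * u' p). split.
  + apply real_hyperholo_qmul; apply (real_hyperholo_inter _ _ _ _ _ _ _ Huv Hu'v').
  + intros p [Vp Wp]. unfold qmul1, qmul2.
    destruct (Ef p Vp) as [-> ->], (Eg p Wp) as [-> ->].
    split; apply injective_projections; simpl; ring.
Qed.
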